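(* Let $A$ be an $n\times n$ Bott matrix, $\Gamma=\pi_1(M(A))$, and let $b_1$ be the first Betti number of $M(A)$. Let $S=\operatorname{span}_{\mathbb{F}_2}\{x_j^2:1\le j\le n\}\subseteq H^2(\Gamma,\mathbb{F}_2)$. Then $\dim_{\mathbb{F}_2}S=n-b_1$ and $S\subseteq\ker\beta^{(2)}$.
   Context: A Bott matrix is a strictly upper triangular $A=[a_{ij}]\in\mathbb{F}_2^{n\times n}$. The real Bott manifold is $M(A)=T^n/C_2^n$, where $C_2^n=\langle c_1,\dots,c_n\rangle$ acts freely on $T^n=(S^1)^n\subset\mathbb{C}^n$ by $$c_i\cdot(z_1,\dots,z_n)=(z_1,\dots,z_{i-1},-z_i,c_{i,i+1}(z_{i+1}),\dots,c_{i,n}(z_n)),$$ with $c_{i,j}(z)=z$ if $a_{ij}=0$ and $\bar z$ if $a_{ij}=1$. Let $\pi\colon\Gamma\to C_2^n$ be the induced surjection (kernel $\mathbb{Z}^n$). Let $c_i^*\in\operatorname{Hom}(C_2^n,\mathbb{F}_2)$ satisfy $c_i^*(c_j)=\delta_{ij}$, and put $x_i=\pi^*(c_i^* )\in H^1(\Gamma,\mathbb{F}_2)$. It is known that $H^*(\Gamma,\mathbb{F}_2)\cong\mathbb{F}_2[x_1,\dots,x_n]/(x_j^2+\alpha_jx_j:1\le j\le n)$ with $\alpha_j=\sum_{i=1}^{j-1}a_{ij}x_i$, and that $\{x_ix_j:i<j\}$ is a basis of $H^2(\Gamma,\mathbb{F}_2)$. Here $\beta^{(2)}\colon H^2(\Gamma,\mathbb{F}_2)\to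 H^3(\Gamma,\mathbb{F}_2)$ is the Bockstein homomorphism of $0\to\mathbb{F}_2\to\mathbb{Z}/4\to\mathbb{F}_2\to0$. *)

From HB Require Import structures.
From mathcomp Require Import all_boot all_order all_algebra.
Set Implicit Arguments. Unset Strict Implicit. Unset Printing Implicit Defensive.
Import Order.TTheory GRing.Theory Num.Theory.
Local Open Scope ring_scope.

Definition bott_matrix (n : nat) (A : 'M['F_2]_n) : Prop :=
  forall i j : 'I_n, (j <= i)%N -> A i j = 0.

(* The group Gamma = pi_1(M(A)) realised as the deck-transformation group of
   R^n -> T^n -> M(A) (with z_j = exp(2 pi i t_j)):  Gamma consists of the affine
   maps  t |-> D_w t + w/2  for w in Z^n, where D_w is diagonal with
   (D_w)_jj = (-1)^(sum_i a_ij w_i).  The element is encoded by w. *)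
Definition Gam (n : nat) := {ffun 'I_n -> int}.

Definition xcls (n : nat) (i : 'I_n) (w : Gam n) : 'F_2 := (w i)%:~R.

Definition eps (n : nat) (A : 'M['F_2]_n) (w : Gam n) (j : 'I_n) : 'F_2 :=
  \sum_(i < n) A i j * xcls i w.

(* composition of affine maps: (D_w t + w/2) o (D_w' t + w'/2) *)
Definition gmul (n : nat) (A : 'M['F_2]_n) (w w' : Gam n) : Gam n :=
  [ffun j => w j + (if eps A w j == 0 then w' j else - w' j)].

Definition is_cobound2 (n : nat) (A : 'M['F_2]_n) (f : Gam n -> Gam n -> 'F_2) :=
  exists h : Gam n -> 'F_2, forall a b, f a b = h b - h (gmul A a b) + h a.

Definition is_cobound3 (n : nat) (A : 'M['F_2]_n)
    (f : Gam n -> Gam n -> Gam n -> 'F_2) :=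
  exists h : Gam n -> Gam n -> 'F_2, forall a b c,
    f a b c = h b c - h (gmul A a b) c + h a (gmul A b c) - h a b.

(* Bockstein for 0 -> F_2 -> Z/4 -> F_2 -> 0 : lift a 2-cocycle to Z/4 via the
   set-theoretic section, take the coboundary (values in 2Z/4), divide by 2. *)
Definition lift4 (x : 'F_2) : 'Z_4 := (val x)%:R.
Definition half4 (y : 'Z_4) : 'F_2 := ((val y) %/ 2)%:R.

Definition bockstein_cochain (n : nat) (A : 'M['F_2]_n)
    (f : Gam n -> Gam n -> 'F_2) : Gam n -> Gam n -> Gam n -> 'F_2 :=
  fun a b c => half4 (lift4 (f b c) - lift4 (f (gmul A a b) c)
                      + lift4 (f a (gmul A b c)) - lift4 (f a b)).

Definition bockstein_vanishes (n : nat) (A : 'M['F_2]_n)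
    (f : Gam n -> Gam n -> 'F_2) : Prop :=
  is_cobound3 A (bockstein_cochain A f).

Definition xsq (n : nat) (j : 'I_n) : Gam n -> Gam n -> 'F_2 :=
  fun g h => xcls j g * xcls j h.

Definition combo (n : nat) (c : 'I_n -> 'F_2) : Gam n -> Gam n -> 'F_2 :=
  fun g h => \sum_(j < n) c j * xsq j g h.

Definition sq_indep (n : nat) (A : 'M['F_2]_n) (J : {set 'I_n}) : Prop :=
  forall c : 'I_n -> 'F_2, (forall j, j \notin J -> c j = 0) ->
    is_cobound2 A (combo c) -> forall j, c j = 0.

Definition sq_span_dim (n : nat) (A : 'M['F_2]_n) (d : nat) : Prop :=
  (exists J : {set 'I_n}, #|J| = d /\ sq_indep A J) /\
  (forall J : {set 'I_n}, sq_indep A J -> (#|J| <= d)%N).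

(* first Betti number: b_1 = dim_Q H^1(Gamma; Q) = dim_Q Hom(Gamma, Q) *)
Definition is_hom_Q (n : nat) (A : 'M['F_2]_n) (phi : Gam n -> rat) : Prop :=
  forall a b, phi (gmul A a b) = phi a + phi b.

Definition Q_indep (n m : nat) (phi : 'I_m -> Gam n -> rat) : Prop :=
  forall c : 'I_m -> rat, (forall g, \sum_(i < m) c i * phi i g = 0) ->
    forall i, c i = 0.

Definition is_betti1 (n : nat) (A : 'M['F_2]_n) (b : nat) : Prop :=
  (exists phi : 'I_b -> Gam n -> rat, (forall i, is_hom_Q A (phi i)) /\ Q_indep phi) /\
  (forall phi : 'I_b.+1 -> Gam n -> rat, (forall i, is_hom_Q A (phi i)) -> ~ Q_indep phi).

From HB Require Import structures.
From mathcomp Require Import all_boot all_order all_algebra.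
From mathcomp Require Import ring lra.
Import GRing.Theory.
Set Implicit Arguments. Unset Strict Implicit.
Local Open Scope ring_scope.

(* Both halves of the theorem come from the same dichotomy among the columns
   of the Bott matrix.  If column k is zero, the k-th coordinate w |-> w_k is a
   homomorphism Gamma -> Z; these give b_1 independent rational classes, and
   x_k, being its reduction, lifts to Z/4, so x_k^2 = Sq^1 x_k = 0.  If column k
   is nonzero, some generator s_i inverts s_k, so every rational class kills
   s_k (hence b_1 is exactly the number of zero columns), and evaluating a
   cobounding cochain on s_k and s_k^-1 detects the coefficient of x_k^2.
   Finally x_j^2 lifts to the Z/4-cocycle lift(x_j) lift(x_j), so the Bockstein
   of any combination of squares vanishes. *)

Fact pchar_F2 : 2 \in [pchar 'F_2].
Proof. exact: pchar_Fp. Qed.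

Definition mod2 (y : 'Z_4) : 'F_2 := (val y)%:R.

Fact mod2_is_zmod_morphism : zmod_morphism mod2.
Proof. by do 2![case=> [[|[|[|[|?]]]] ?] //]; apply/val_inj. Qed.

Fact mod2_is_monoid_morphism : monoid_morphism mod2.
Proof.
by split; [apply/val_inj | do 2![case=> [[|[|[|[|?]]]] ?] //]; apply/val_inj].
Qed.

HB.instance Definition _ :=
  GRing.isZmodMorphism.Build _ _ mod2 mod2_is_zmod_morphism.
HB.instance Definition _ :=
  GRing.isMonoidMorphism.Build _ _ mod2 mod2_is_monoid_morphism.

Lemma mod2_lift4 (x : 'F_2) : mod2 (lift4 x) = x.
Proof. by case: x => [[|[|?]] ?] //; apply/val_inj. Qed.

Lemma half4D (p q : 'Z_4) : half4 (p + q) = half4 p + half4 q + mod2 p * mod2 q.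
Proof. by move: p q; do 2![case=> [[|[|[|[|?]]]] ?] //]; apply/val_inj. Qed.

Lemma half4_double (y : 'Z_4) : half4 (y *+ 2) = mod2 y.
Proof. by case: y => [[|[|[|[|?]]]] ?] //; apply/val_inj. Qed.

Lemma double_half4 (y : 'Z_4) : mod2 y = 0 -> lift4 (half4 y) *+ 2 = y.
Proof. by case: y => [[|[|[|[|?]]]] ?] // /(congr1 val) //= _; apply/val_inj. Qed.

(* The cup square of the identity cocycle of Z/2 lifts to a Z/4-cocycle. *)
Lemma lift4_mul_cocycle (p q r : 'F_2) :
  lift4 (q * r) - lift4 ((p + q) * r) + lift4 (p * (q + r)) - lift4 (p * q) = 0.
Proof. by move: p q r; do 3![case=> [[|[|?]] ?] //]; apply/val_inj. Qed.

Section Cochains.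
Variables (n : nat) (A : 'M['F_2]_n).

Definition coboundary2 (V : zmodType) (F : Gam n -> Gam n -> V) a b c : V :=
  F b c - F (gmul A a b) c + F a (gmul A b c) - F a b.

Definition cocycle2 (V : zmodType) (F : Gam n -> Gam n -> V) :=
  forall a b c, coboundary2 F a b c = 0.

Lemma cocycle2_lincomb (R : pzRingType) (I : finType) (k : I -> R)
    (F : I -> Gam n -> Gam n -> R) :
  (forall i, cocycle2 (F i)) -> cocycle2 (fun a b => \sum_i k i * F i a b).
Proof.
move=> Fcoc a b c; rewrite /coboundary2 -!sumrB -big_split -sumrB /=.
apply: big1 => i _; have := Fcoc i a b c; rewrite /coboundary2 => F0.
by rewrite -!mulrBr -mulrDr -mulrBr F0 mulr0.
Qed.

Lemma bockstein_vanishes_of_Z4_lift (f : Gam n -> Gam n -> 'F_2)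
    (F : Gam n -> Gam n -> 'Z_4) :
  cocycle2 F -> (forall a b, mod2 (F a b) = f a b) -> bockstein_vanishes A f.
Proof.
move=> Fcoc Ff.
pose e a b := half4 (lift4 (f a b) - F a b).
have lift_f a b : lift4 (f a b) = F a b + lift4 (e a b) *+ 2.
  rewrite double_half4; first by rewrite addrC subrK.
  by rewrite rmorphB /= mod2_lift4 Ff subrr.
exists e => a b c; rewrite /bockstein_cochain.
transitivity (half4 (coboundary2 F a b c
                     + coboundary2 (fun a b => lift4 (e a b)) a b c *+ 2)).
  by congr half4; rewrite /coboundary2 !lift_f !mulr2n; ring.
by rewrite Fcoc add0r half4_double /coboundary2 !(rmorphB, rmorphD) /= !mod2_lift4.
Qed.

Lemma xcls_gmul j a b : xcls j (gmul A a b) = xcls j a + xcls j b.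
Proof.
rewrite /xcls ffunE intrD; case: eqP => // _.
by rewrite intrN (oppr_pchar2 pchar_F2).
Qed.

Lemma bockstein_vanishes_combo c : bockstein_vanishes A (combo c).
Proof.
apply: (@bockstein_vanishes_of_Z4_lift _
          (fun a b => \sum_j lift4 (c j) * lift4 (xsq j a b))).
  apply: cocycle2_lincomb => j a b d.
  by rewrite /coboundary2 /xsq !xcls_gmul lift4_mul_cocycle.
move=> a b; rewrite rmorph_sum; apply: eq_bigr => j _.
by rewrite rmorphM /= !mod2_lift4.
Qed.

Lemma cobound2_of_Z4_hom (u : Gam n -> 'Z_4) :
    (forall a b, u (gmul A a b) = u a + u b) ->
  is_cobound2 A (fun a b => mod2 (u a) * mod2 (u b)).
Proof.
move=> uM; exists (half4 \o u) => a b /=.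
by rewrite uM half4D -[LHS](oppr_pchar2 pchar_F2); ring.
Qed.

End Cochains.

Section BottGroup.
Variables (n : nat) (A : 'M['F_2]_n).
Hypothesis bottA : bott_matrix A.

Lemma bott_lt i k : A i k != 0 -> (i < k)%N.
Proof. by apply: contraR; rewrite -leqNgt => /bottA ->. Qed.

Definition gen_pow (k : 'I_n) (t : int) : Gam n :=
  [ffun l => if l == k then t else 0].

Lemma xcls_gen_pow j k t : xcls j (gen_pow k t) = (if j == k then t else 0)%:~R.
Proof. by rewrite /xcls ffunE. Qed.

Lemma eps_gen_pow k t j : eps A (gen_pow k t) j = A k j * t%:~R.
Proof.
rewrite /eps (bigD1 k) //= big1 ?addr0 => [|i /negPf ik].
  by rewrite xcls_gen_pow eqxx.
by rewrite xcls_gen_pow ik mulr0.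
Qed.

Lemma gmul_gen_pow k s t : gmul A (gen_pow k s) (gen_pow k t) = gen_pow k (s + t).
Proof.
apply/ffunP => l; rewrite !ffunE eps_gen_pow.
case: (eqVneq l k) => [->|_]; first by rewrite (bottA (leqnn k)) mul0r eqxx.
by rewrite oppr0 if_same add0r.
Qed.

Lemma gen_pow_conj i k t :
  A i k != 0 -> gmul A (gen_pow i 1) (gen_pow k t) = gmul A (gen_pow k (- t)) (gen_pow i 1).
Proof.
move=> Aik; have ik := bott_lt Aik.
have ikF : (i == k) = false := ltn_eqF ik.
apply/ffunP => l; rewrite !ffunE !eps_gen_pow.
case: (eqVneq l i) => [->|li].
  by rewrite ikF (bottA (ltnW ik)) (bottA (leqnn i)) !mul0r eqxx add0r addr0.
case: (eqVneq l k) => [->|lk]; last by rewrite oppr0 !if_same addr0.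
by rewrite (bottA (leqnn k)) mul0r eqxx mulr1 (negPf Aik) add0r addr0.
Qed.

Lemma gmul0 : gmul A 0 0 = 0.
Proof. by apply/ffunP => l; rewrite !ffunE oppr0 if_same addr0. Qed.

Definition zero_cols : {set 'I_n} := [set k | [forall i, A i k == 0]].

Lemma nonzero_colP k : k \notin zero_cols -> exists i, A i k != 0.
Proof. by rewrite inE => /forallPn. Qed.

Lemma gmul_zero_col a b k : k \in zero_cols -> gmul A a b k = a k + b k.
Proof.
rewrite inE => /forallP A0; rewrite ffunE /eps big1 ?eqxx // => i _.
by rewrite (eqP (A0 i)) mul0r.
Qed.

Section HomQ.
Variable phi : Gam n -> rat.
Hypothesis phiM : is_hom_Q A phi.

Lemma homQ0 : phi 0 = 0.
Proof. by have := phiM 0 0; rewrite gmul0 => ?; lra. Qed.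

Lemma homQ_gen_pow k t : phi (gen_pow k t) = t%:~R * phi (gen_pow k 1).
Proof.
have phiD s u : phi (gen_pow k (s + u)) = phi (gen_pow k s) + phi (gen_pow k u).
  by rewrite -phiM gmul_gen_pow.
have phi0 : phi (gen_pow k 0) = 0 by have := phiD 0 0; rewrite addr0 => ?; lra.
have phi_nat (m : nat) : phi (gen_pow k m) = m%:R * phi (gen_pow k 1).
  elim: m => [|m IH]; first by rewrite phi0 mul0r.
  by rewrite -addn1 PoszD phiD IH natrD mulrDl mul1r.
case: t => m; first by rewrite phi_nat.
have := phiD (Negz m) m.+1; rewrite NegzE addNr phi0 phi_nat intrN => ?; lra.
Qed.

Lemma homQ_nonzero_col k : k \notin zero_cols -> phi (gen_pow k 1) = 0.
Proof.
case/nonzero_colP => i /(gen_pow_conj 1) /(congr1 phi).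
by rewrite !phiM (homQ_gen_pow k (-1)) intrN mulN1r => ?; lra.
Qed.

Definition trunc (w : Gam n) (m : nat) : Gam n :=
  [ffun l : 'I_n => if (l < m)%N then w l else 0].

(* Multiplying on the left by s_k^(w_k) does not twist the lower coordinates,
   since A k l = 0 for l <= k. *)
Lemma trunc_succ w (k : 'I_n) : trunc w k.+1 = gmul A (gen_pow k (w k)) (trunc w k).
Proof.
apply/ffunP => l; rewrite !ffunE eps_gen_pow ltnS.
case: (ltngtP l k) => [lk|kl|/val_inj ->].
- by rewrite (ltn_eqF lk : (l == k) = false) (bottA (ltnW lk)) mul0r eqxx add0r.
- by rewrite (gtn_eqF kl : (l == k) = false) oppr0 !if_same addr0.
- by rewrite eqxx oppr0 !if_same addr0.
Qed.

Lemma homQ_decomp w : phi w = \sum_(k < n) (w k)%:~R * phi (gen_pow k 1).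
Proof.
suff trunc_sum m : (m <= n)%N ->
    phi (trunc w m) = \sum_(k < n | (k < m)%N) (w k)%:~R * phi (gen_pow k 1).
  have trunc_n : trunc w n = w by apply/ffunP => l; rewrite ffunE ltn_ord.
  by rewrite -{1}trunc_n trunc_sum //; apply: eq_bigl => k; rewrite ltn_ord.
elim: m => [_|m IH lt_mn].
  by rewrite big_pred0 // -homQ0; congr phi.
pose k0 := Ordinal lt_mn.
have /= -> := trunc_succ w k0.
rewrite phiM homQ_gen_pow (IH (ltnW lt_mn)) [RHS](bigD1 k0) //=.
congr (_ + _); apply: eq_bigl => k.
by rewrite [RHS]andbC ltnS -val_eqE /= -ltn_neqAle.
Qed.

End HomQ.

Lemma coord_homQ k : k \in zero_cols -> is_hom_Q A (fun w => (w k)%:~R).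
Proof. by move=> kZ a b; rewrite gmul_zero_col // intrD. Qed.

Lemma homQ_indep_card b (phi : 'I_b -> Gam n -> rat) :
  (forall i, is_hom_Q A (phi i)) -> Q_indep phi -> (b <= #|zero_cols|)%N.
Proof.
move=> phiM indep; rewrite leqNgt; apply/negP => lt_Zb.
pose M : 'M[rat]_(b, #|zero_cols|) := \matrix_(i, l) phi i (gen_pow (enum_val l) 1).
have /rowV0Pn [v /sub_kermxP vM /rV0Pn [j vj]] : kermx M != 0.
  by rewrite kermx_eq0; apply: contraL lt_Zb => /eqP <-; rewrite -leqNgt rank_leq_col.
suff vphi g : \sum_i v 0 i * phi i g = 0 by rewrite (indep _ vphi) eqxx in vj.
under eq_bigr => i _ do rewrite (homQ_decomp (phiM i)) mulr_sumr.
rewrite exchange_big; apply: big1 => k _ /=.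
have [kZ | kNZ] := boolP (k \in zero_cols); last first.
  by apply: big1 => i _; rewrite (homQ_nonzero_col (phiM i) kNZ) !mulr0.
have /matrixP/(_ 0 (enum_rank_in kZ k)) := vM; rewrite !mxE => vMk.
transitivity ((g k)%:~R * \sum_i v 0 i * M i (enum_rank_in kZ k)).
  by rewrite mulr_sumr; apply: eq_bigr => i _; rewrite mxE enum_rankK_in //; ring.
by rewrite vMk mulr0.
Qed.

Lemma zero_cols_card_le b :
    (forall phi : 'I_b.+1 -> Gam n -> rat,
       (forall i, is_hom_Q A (phi i)) -> ~ Q_indep phi) ->
  (#|zero_cols| <= b)%N.
Proof.
move=> dep; rewrite leqNgt; apply/negP => lt_bZ.
pose k (i : 'I_b.+1) := enum_val (widen_ord lt_bZ i).
apply: (dep (fun i w => (w (k i))%:~R)) => [i|c c_phi i].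
  exact/coord_homQ/enum_valP.
have := c_phi (gen_pow (k i) 1); rewrite (bigD1 i) //= big1 => [|i' i'i].
  by rewrite ffunE eqxx mulr1 addr0.
rewrite ffunE (inj_eq enum_val_inj) -val_eqE /= val_eqE (negPf i'i).
by rewrite mulr0.
Qed.

Lemma betti1_eq b : is_betti1 A b -> b = #|zero_cols|.
Proof.
case=> [[phi [phiM indep]] dep]; apply/eqP.
by rewrite eqn_leq (homQ_indep_card phiM indep) zero_cols_card_le.
Qed.

Lemma combo_gen_pow c i s k t :
  combo c (gen_pow i s) (gen_pow k t) = if i == k then c i * (s * t)%:~R else 0.
Proof.
rewrite /combo (bigD1 i) //= big1 ?addr0 => [|j /negPf ji]; last first.
  by rewrite /xsq xcls_gen_pow ji mul0r mulr0.
rewrite /xsq !xcls_gen_pow eqxx (eq_sym i k).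
by case: eqP => _; rewrite ?intrM // mulr0 mulr0.
Qed.

(* With s_i s_k = s_k^-1 s_i, a cobounding cochain h takes equal values on s_k
   and s_k^-1, and then the value of combo c on (s_k, s_k^-1) is c k. *)
Lemma combo_cobound_nonzero_col c k :
  k \notin zero_cols -> is_cobound2 A (combo c) -> c k = 0.
Proof.
case/nonzero_colP => i Aik [h dh].
have ikF : (i == k) = false := ltn_eqF (bott_lt Aik).
have kiF : (k == i) = false by rewrite eq_sym.
have h_inv : h (gen_pow k 1) = h (gen_pow k (-1)).
  have := dh (gen_pow i 1) (gen_pow k 1); have := dh (gen_pow k (-1)) (gen_pow i 1).
  rewrite !combo_gen_pow ikF kiF (gen_pow_conj 1 Aik).
  set g := gmul A _ _ => e2 e1; apply/eqP; rewrite -subr_eq0.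
  have -> : h (gen_pow k 1) - h (gen_pow k (-1)) =
            (h (gen_pow k 1) - h g + h (gen_pow i 1))
            - (h (gen_pow i 1) - h g + h (gen_pow k (-1))) by ring.
  by rewrite -e1 -e2 subrr.
have h0 : h (gen_pow k 0) = 0.
  have := dh (gen_pow k 0) (gen_pow k 0).
  by rewrite combo_gen_pow eqxx gmul_gen_pow addr0 subrr add0r => <-; rewrite mulr0.
have := dh (gen_pow k 1) (gen_pow k (-1)).
rewrite combo_gen_pow eqxx gmul_gen_pow addrN h0 subr0 h_inv.
by rewrite (addrr_pchar2 pchar_F2) mul1r intrN mulrN1 (oppr_pchar2 pchar_F2).
Qed.

Lemma xsq_zero_col_cobound j :
  j \in zero_cols -> is_cobound2 A (combo (fun k => (k == j)%:R)).
Proof.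
move=> jZ.
have coordM a b : (gmul A a b j)%:~R = (a j)%:~R + (b j)%:~R :> 'Z_4.
  by rewrite gmul_zero_col // intrD.
have [h dh] := cobound2_of_Z4_hom (u := fun w => (w j)%:~R) coordM.
exists h => a b; rewrite -dh !rmorph_int /combo (bigD1 j) //= big1 ?addr0.
  by rewrite eqxx mul1r.
by move=> k /negPf ->; rewrite mul0r.
Qed.

Lemma sq_span_dim_nonzero_cols : sq_span_dim A #|~: zero_cols|.
Proof.
split.
  exists (~: zero_cols); split=> // c c_supp cob k.
  have [kZ | kNZ] := boolP (k \in zero_cols).
    by apply: c_supp; rewrite inE kZ.
  exact: combo_cobound_nonzero_col cob.
move=> J indep; apply/subset_leq_card/subsetP => j jJ.
rewrite inE; apply/negP => jZ.
have supp k : k \notin J -> (k == j)%:R = 0 :> 'F_2 by case: eqP => // ->; rewrite jJ.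
by have /eqP := indep _ supp (xsq_zero_col_cobound jZ) j; rewrite eqxx oner_eq0.
Qed.

End BottGroup.

Unset Implicit Arguments.

Theorem mainTheorem8 (n : nat) (A : 'M['F_2]_n) (b1 : nat) :
  bott_matrix A -> is_betti1 A b1 ->
  sq_span_dim A (n - b1)%N /\
  (forall c : 'I_n -> 'F_2, bockstein_vanishes A (combo c)).
Proof.
move=> bottA betti; split; last exact: bockstein_vanishes_combo.
have -> : (n - b1)%N = #|~: zero_cols A|.
  rewrite (betti1_eq bottA betti).
  by have := cardsC (zero_cols A); rewrite card_ord => {1}<-; rewrite addKn.
exact: sq_span_dim_nonzero_cols.
Qed.
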